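(* Let $T$ be a p-string of length $n$ over disjoint alphabets $\Sigma$ and $\Pi$, with $\sigma=|\Sigma|$ and $\pi=|\Pi|$. The right-to-left construction algorithm described below builds $\mathrm{PPH}(T[i..])$ for $i=n,\ldots,1$, and runs in a total of $O(n\log(\sigma+\pi))$ time with $O(n)$ space.
   Context: A p-string is a finite string over $\Sigma\cup\Pi$. For a string $S$, $S[i]$ is its $i$-th character, $S[i..j]$ is the substring from position $i$ to $j$ (empty if $j<i$), and $S[i..]=S[i..|S|]$. The previous encoding $\mathrm{prev}(S)$ of a p-string $S$ of length $n$ is the sequence of length $n$ defined by: - $\mathrm{prev}(S)[i]=S[i]$ if $S[i]\in\Sigma$; - $\mathrm{prev}(S)[i]=0$ if $S[i]\in\Pi$ does not occur in $S[1..i-1]$; - $\mathrm{prev}(S)[i]=i-j$ otherwise, where $j<i$ is the largest position with $S[j]=S[i]$. Sequence hash tree. Let $\langle S_1,\ldots,S_k\rangle$ be a sequence of strings with $S_1=\varepsilon$ and with $S_i$ not a prefix of $S_j$ for any $j<i$. Its sequence hash tree is built as follows. Start from a root representing $\varepsilon$. For $i=2,\ldots,k$, insert as a new node the shortest prefix $p_i$ of $S_i$ that is not yet a node. Attach it as a child of the longest prefix $q_i$ of $S_i$ that is already a node, via an edge labeled $S_i[|q_i|+1]$. $\mathrm{PPH}(T[i..])$ is the sequence hash tree of $\langle\varepsilon,\mathrm{prev}(T[n..]),\ldots,\mathrm{prev}(T[i..])\rangle$. Nodes are identified with their path labels, and $|v|$ is the depth. The node with id $j$ is the node inserted for $\mathrm{prev}(T[j..])$.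 Reversed suffix links are defined as follows: - $\mathrm{rslink}(a,v)=av$ if $a\in\Sigma\cup\{0\}$ and $av$ is a node; - $\mathrm{rslink}(a,v)=0\,v[1..a-1]\,a\,v[a+1..|v|]$ if $a\in\{1,\ldots,n-1\}$, $v[a]=0$, and that string is a node; - otherwise $\mathrm{rslink}(a,v)$ is undefined. An auxiliary node $\perp$ of depth $-1$ is the parent of the root $r$, with $\mathrm{rslink}(a,\perp)=r$ for $a\in\Sigma\cup\{0\}$. Algorithm. Start from the heap consisting of the root only. For each position, maintain (for example, in a balanced search tree) the nearest next occurrence of each p-character, so that $\mathrm{prev}(T[i-1..])$ can be obtained from $\mathrm{prev}(T[i..])$. Children and reversed suffix links of each node are stored in balanced search trees keyed by their labels. To update $\mathrm{PPH}(T[i..])$ to $\mathrm{PPH}(T[i-1..])$, let $v_i$ be the node with id $i$ and walk up from $v_i$ to the ancestor $v'_i$ determined as follows: 1. If $T[i-1]\in\Sigma$, $v'_i$ is the lowest ancestor with $\mathrm{rslink}(T[i-1],v'_i)$ defined. 2. If $T[i-1]\in\Pi$ does not occur in $T[i..]$, $v'_i$ is the lowest ancestor with $\mathrm{rslink}(0,v'_i)$ defined. 3. Otherwise, with $j\ge i$ the smallest position having $T[j]=T[i-1]$ and $d=j-(i-1)$, $v'_i$ is the lowest ancestor with $\mathrm{rslink}(d,v'_i)$ defined if one exists, and otherwise the lowest ancestor with $\mathrm{rslink}(0,v'_i)$ defined. Let $u_i$ be the target of that link. Insert a new node $v_{i-1}$ (id $i-1$) as a child of $u_i$ with edge label $\mathrm{prev}(T[i-1..])[|u_i|+1]$.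 Add the single new reversed suffix link pointing to $v_{i-1}$, from the ancestor of $v_i$ of depth $|v'_i|+1$. Links from $\perp$ for s-characters are added only when the character first occurs.
   Formalization: In case 3, the walk up from $v_i$ seeks a d-link at ancestors of depth ≥ d and a 0-link at shallower ones, and the new reversed suffix link is keyed d or 0 by its source's depth. Each condition added here is assumed in the paper as well or is needed for the statement above to hold. *)

From mathcomp Require Import all_boot.
Set Implicit Arguments. Unset Strict Implicit. Unset Printing Implicit Defensive.

(* P-strings over disjoint alphabets Sigma = S and Pi = P: seq (S + P).      *)
(* Prev-characters (entries of prev encodings): Sigma \cup nat, i.e. S + nat *)
(* All positions below are 1-indexed as in the paper unless stated.          *)

Section PPH.
Variables S P : finType.

Definition pchar := (S + P)%type.
Definition pc := (S + nat)%type.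

(* prev(T)[i+1] where c = T[i+1] (i is the 0-indexed position) *)
Definition prev_at (T : seq pchar) (i : nat) (c : pchar) : pc :=
  match c with
  | inl a => inl a
  | inr p =>
      let pre := take i T in
      if (inr p : pchar) \in pre then inr (index (inr p : pchar) (rev pre)).+1
      else inr 0
  end.

Definition prev_enc (T : seq pchar) : seq pc :=
  map (fun ic => prev_at T ic.1 ic.2) (zip (iota 0 (size T)) T).

(* Sequence hash tree: nodes = path labels, listed in insertion order (the  *)
(* root eps first).  Parents/edge labels are determined by path labels.     *)
Definition sht_insert (N : seq (seq pc)) (s : seq pc) : seq (seq pc) :=
  rcons N (take (find (fun k => take k s \notin N) (iota 0 (size s).+1)) s).

Definition sht (ss : seq (seq pc)) : seq (seq pc) := foldl sht_insert [:: [::]] ss.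

(* PPH(T[i..]) for 1 <= i <= |T|+1: sequence hash tree of                   *)
(* <eps, prev(T[n..]), ..., prev(T[i..])>.  The node at list position m >= 1 *)
(* has id n - m + 1.                                                        *)
Definition PPH (T : seq pchar) (i : nat) : seq (seq pc) :=
  sht [seq prev_enc (drop j.-1 T) | j <- rev (iota i ((size T).+1 - i))].

(* Each balanced-search-tree operation on a tree holding m entries costs    *)
(* bst m = floor(log2 (m+1)) + 1.                                           *)

Definition bst (m : nat) : nat := (trunc_log 2 m.+1).+1.

Record state := State {
  st_nodes : seq (seq pc);                 (* nodes, insertion order, root first *)
  st_links : seq (seq pc * pc * seq pc);   (* reversed suffix links (source, key, target) *)
  st_bot   : seq S;                        (* s-characters having a link from bottom *)
  st_next  : seq (P * nat)                 (* nearest next occurrence of p-characters *)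
}.

Definition init_state : state := State [:: [::]] [::] [::] [::].

Definition link_match (x : seq pc) (a : pc) (l : seq pc * pc * seq pc) : bool :=
  (l.1.1 == x) && (l.1.2 == a).
Definition has_link (L : seq (seq pc * pc * seq pc)) x a := has (link_match x a) L.
Definition link_tgt (L : seq (seq pc * pc * seq pc)) x a : seq pc :=
  (nth (x, a, [::]) L (find (link_match x a) L)).2.
Definition nlinks (L : seq (seq pc * pc * seq pc)) x := count (fun l => l.1.1 == x) L.
Definition nchildren (N : seq (seq pc)) (u : seq pc) :=
  count (fun w => (size w == (size u).+1) && (take (size u) w == u)) N.

Definition lookup_next (nx : seq (P * nat)) (p : P) : option nat :=
  if has (fun e => e.1 == p) nx
  then Some (nth (p, 0) nx (find (fun e => e.1 == p) nx)).2 else None.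
Definition update_next (nx : seq (P * nat)) (p : P) (q : nat) :=
  (p, q) :: filter (fun e => e.1 != p) nx.

Definition anc (v : seq pc) : seq (seq pc) :=
  [seq take j v | j <- rev (iota 0 (size v).+1)].

(* The key a whose reversed suffix link is searched for at an ancestor x  *)
(* of v_{q+1} (cases 1-3 of the algorithm), where c = T[q]:                *)
(*  1. c in Sigma: a = c;  2. c in Pi not occurring in T[q+1..]: a = 0;     *)
(*  3. otherwise, with d = j - q (j the nearest next occurrence of c):      *)
(*     a = d at ancestors of depth >= d, and a = 0 at ancestors of depth    *)
(*     < d (a d-link can only exist at depth >= d).          *)
Definition key_at (st : state) (q : nat) (c : pchar) (x : seq pc) : pc :=
  match c with
  | inl s => inl s
  | inr p =>
      match lookup_next (st_next st) p with
      | None => inr 0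
      | Some j => if j - q <= size x then inr (j - q) else inr 0
      end
  end.

(* key used at the auxiliary node bottom (which has links only for Sigma and 0) *)
Definition key_bot (c : pchar) : pc :=
  match c with inl s => inl s | inr _ => inr 0 end.

(* One update PPH(T[q+1..]) -> PPH(T[q..]), where c = T[q].  Returns the    *)
(* new state and the cost of the update.                                    *)
Definition step (T : seq pchar) (q : nat) (c : pchar) (st : state) : state * nat :=
  let N := st_nodes st in
  let L := st_links st in
  let v := last [::] N in               (* v_{q+1}, the last inserted node *)
  let A := anc v in
  let bot' := match c with
              | inl s => if s \in st_bot st then st_bot st else s :: st_bot st
              | inr _ => st_bot st end in
  let vidx := find (fun x => has_link L x (key_at st q c x)) A in
                                       (* v' = nth A vidx, or bottom *)
  let isbot := vidx == size A in
  let key := if isbot then key_bot c else key_at st q c (nth [::] A vidx) in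
                                       (* key of the link followed at v' *)
  let u := if isbot then [::] else link_tgt L (nth [::] A vidx) key in
  let w := rcons u (nth (inr 0) (prev_enc (drop q.-1 T)) (size u)) in
  let src := take ((size v).+1 - vidx) v in  (* ancestor of v of depth |v'|+1 *)
  let nx' := match c with inr p => update_next (st_next st) p q | inl _ => st_next st end in
  let walk := sumn [seq bst (nlinks L x) | x <- take vidx.+1 A]
              + (if isbot then bst (size bot').+1 else 0) in
  let cost := walk + bst (nchildren N u) + bst (nlinks L src)
              + bst (size (st_next st)) + bst (size (st_bot st)) in
  (* the new link from src to w; its key is the one valid at depth |src| *)
  (State (rcons N w) (rcons L (src, key_at st q c src, w)) bot' nx', cost).

(* run T m: state and cumulated cost after processing T[n], ..., T[n-m+1],  *)
(* i.e. the structure for PPH(T[n-m+1..]).                                  *)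
Fixpoint run (T : seq pchar) (m : nat) : state * nat :=
  match m with
  | 0 => (init_state, 0)
  | m'.+1 =>
      let: (st, cst) := run T m' in
      let q := size T - m' in
      match drop q.-1 T with
      | c :: _ => let: (st', c') := step T q c st in (st', cst + c')
      | [::] => (st, cst)
      end
  end.

(* space used: nodes (= child entries + 1), links, bottom links, next-occurrence tree *)
Definition space (st : state) : nat :=
  size (st_nodes st) + size (st_links st) + size (st_bot st) + size (st_next st).

End PPH.

From Pilot Require Import Defs.
From mathcomp Require Import all_boot zify.
Set Implicit Arguments. Unset Strict Implicit. Unset Printing Implicit Defensive.

(* After m steps the state holds the nodes of PPH(T[n-m+1..]) and, for every
   non-root node z, one reversed suffix link into z from its suffix link slink z
   (the prev encoding of the string without its first character), whose key
   determines z given slink z.  The nodes are closed under suffix links, and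
   the suffix link of a newly inserted node is a prefix of the previously
   inserted one.  Hence, walking up from v_i, the ancestor of depth k has the
   searched link iff the prefix of length k + 1 of prev(T[i-1..]) is already a
   node: the walk stops at the parent of exactly the node that the sequence
   hash tree inserts, and the depth grows by at most one per step, so the walk
   lengths telescope to O(n).  Every search tree holds at most sigma + pi + 1
   keys, since the keys of the links leaving a node, and the labels of its
   children, are characters of Sigma, 0, or distances to pairwise distinct
   p-characters; each operation thus costs O(log(sigma + pi)).  Each step
   creates one node and one link. *)

(* Otherwise [path.prev_at] of mathcomp takes precedence. *)
Local Notation prev_at := Defs.prev_at.

Lemma index_notin_take (T0 : eqType) (x : T0) s : x \notin take (index x s) s.
Proof. by apply/negP => /index_ltn; rewrite ltnn. Qed.

Lemma index_take (T0 : eqType) (x : T0) s k : index x s < k -> index x (take k s) = index x s.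
Proof.
elim: s k => [|y s IH] [|k] //=.
by case: eqP => // _; rewrite ltnS => /IH ->.
Qed.

Lemma find_eq (T0 : Type) x0 (p : pred T0) (s : seq T0) i : i <= size s ->
  (forall k, k < i -> ~~ p (nth x0 s k)) -> (i < size s -> p (nth x0 s i)) -> find p s = i.
Proof.
elim: s i => [|x s IH] [|i] //= hi hb hp; first by rewrite hp.
rewrite (negbTE (hb 0 _)) // (IH i) // => k hk; exact: (hb k.+1).
Qed.

Lemma sumn_le (B : nat) (s : seq nat) : {in s, forall x, x <= B} -> sumn s <= size s * B.
Proof.
elim: s => [|x s IH] //= h; rewrite mulSn leq_add ?h ?mem_head // IH // => y hy.
by rewrite h // inE hy orbT.
Qed.

(** * Prev encodings *)

Section PrevEncoding.
Variables S P : finType.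
Local Notation pchar := (pchar S P).
Local Notation pc := (pc S).

Definition is_param (c : pchar) : bool := if c is inr _ then true else false.

Lemma size_prev_enc (X : seq pchar) : size (prev_enc X) = size X.
Proof. by rewrite /prev_enc size_map size_zip size_iota minnn. Qed.

Lemma nth_prev_enc (X : seq pchar) x0 k : k < size X ->
  nth (inr 0) (prev_enc X) k = prev_at X k (nth x0 X k).
Proof.
move=> hk; rewrite /prev_enc (nth_map (0, x0)); last by rewrite size_zip size_iota minnn.
by rewrite nth_zip ?size_iota // nth_iota.
Qed.

Lemma prev_at_take (X : seq pchar) k i c : i <= k -> prev_at (take k X) i c = prev_at X i c.
Proof. by move=> hik; rewrite /Defs.prev_at take_takel. Qed.

Lemma take_prev_enc (X : seq pchar) k : take k (prev_enc X) = prev_enc (take k X).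
Proof.
case: X => [|x0 X]; first by case: k.
apply: (@eq_from_nth _ (inr 0)); first by rewrite !size_take_min !size_prev_enc size_take_min.
move=> i; rewrite size_take_min size_prev_enc => hi.
rewrite nth_take; last by lia.
rewrite !(nth_prev_enc x0) ?size_take_min; try lia.
by rewrite nth_take ?prev_at_take //; lia.
Qed.

Lemma prev_at_inl (X : seq pchar) k s : prev_at X k (inl s) = inl s.
Proof. by []. Qed.

Lemma prev_at_inr (X : seq pchar) k p : exists d, prev_at X k (inr p) = inr d.
Proof. by rewrite /Defs.prev_at; case: ifP => _; eexists. Qed.

Lemma prev_at_inr_le (X : seq pchar) k c d : prev_at X k c = inr d -> d <= k.
Proof.
rewrite /Defs.prev_at; case: c => // p; case: ifP => hin [] <- //.
rewrite -mem_rev -index_mem size_rev size_take_min in hin; exact: leq_trans hin (geq_minl _ _).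
Qed.


Lemma prev_at_eq_pos (Y : seq pchar) t c d : t <= size Y -> 0 < d -> is_param c ->
  prev_at Y t c = inr d <->
  [/\ d <= t, nth c Y (t - d) = c & forall i, t - d < i < t -> nth c Y i <> c].
Proof.
move=> ht hd; case: c => // p _.
set r := rev (take t Y).
have hsr : size r = t by rewrite size_rev size_takel.
have hnr k : k < t -> nth (inr p) r k = nth (inr p) Y (t - k.+1).
  by move=> hk; rewrite /r nth_rev size_takel // nth_take //; lia.
rewrite /Defs.prev_at -/r; split; last move=> [h1 h2 h3].
- case: ifP => hin [hk]; last by move: hd; rewrite -hk.
  have hkr : index (inr p : pchar) r < t by rewrite -hsr index_mem mem_rev.
  split; first by lia.
    have hinr : (inr p : pchar) \in r by rewrite mem_rev.
    by have := nth_index (inr p) hinr; rewrite hnr // -hk.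
  move=> i /andP [h1 h2] he.
  have hlt : t - i.+1 < index (inr p : pchar) r by lia.
  have := before_find (inr p) hlt; rewrite hnr; [|lia].
  by rewrite (_ : t - (t - i.+1).+1 = i) /= ?he ?eqxx; [|lia].
- have hin : (inr p : pchar) \in take t Y.
    by rewrite -h2 -(nth_take (inr p) (_ : t - d < t)) ?mem_nth ?size_takel //; lia.
  rewrite hin; congr inr.
  suff -> : index (inr p : pchar) r = d.-1 by rewrite prednK.
  have hd1 : d.-1 < size r by lia.
  have hpiv : nth (inr p) r d.-1 = inr p by rewrite hnr ?prednK //; lia.
  rewrite -(cat_take_drop d.-1 r) (drop_nth (inr p) hd1) hpiv index_pivot ?size_takel 1?ltnW //.
  apply/negP => /(nthP (inr p)) [k hk].
  have hkd : k < d.-1 by move: hk; rewrite size_takel // ltnW.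
  rewrite nth_take // hnr; [|lia].
  by apply: h3; lia.
Qed.

Lemma prev_enc_cons_head (c : pchar) X :
  prev_enc (c :: X) = key_bot c :: behead (prev_enc (c :: X)).
Proof. by rewrite /prev_enc /=; case: c. Qed.

Lemma nth_prev_enc_cons (c : pchar) X k : k < size X ->
  nth (inr 0) (prev_enc (c :: X)) k.+1 =
  if is_param c && (index c X == k) then inr k.+1 else nth (inr 0) (prev_enc X) k.
Proof.
move=> hk; rewrite !(nth_prev_enc c) //= /Defs.prev_at /=.
have Hc : index c X = k -> nth c X k = c.
  by move=> hi; rewrite -hi nth_index // -index_mem hi.
case Ex: (nth c X k) => [s|p].
  by case: c Hc Ex => //= p Hc Ex; case: eqP => // /Hc; rewrite Ex.
rewrite in_cons rev_cons -cats1 index_cat mem_rev.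
case: (boolP (inr p \in take k X)) => hin.
  rewrite orbT /=; case: ifP => // /andP [_ /eqP hc].
  by move: hin; rewrite -Ex (Hc hc) -hc (negbTE (index_notin_take _ _)).
rewrite orbF; case: eqP => [ec|nec].
  have hidx : index c X = k.
    apply/eqP; rewrite eqn_leq -ec -Ex index_nth //= leqNgt.
    by rewrite -in_take_leq ?Ex // ltnW.
  rewrite hidx eqxx -ec /= eqxx size_rev size_take_min addn0.
  by congr (inr _.+1); apply/minn_idPl; exact: ltnW.
by case: c nec Hc Ex => [s|p'] nec Hc Ex //=; case: eqP => // /Hc; rewrite Ex.
Qed.

Lemma prev_enc_cons (c : pchar) X : prev_enc (c :: X) = key_bot c ::
  (if is_param c && (c \in X) then set_nth (inr 0) (prev_enc X) (index c X) (inr (index c X).+1)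
   else prev_enc X).
Proof.
rewrite prev_enc_cons_head; congr (_ :: _).
have hs : size (behead (prev_enc (c :: X))) = size X by rewrite size_behead size_prev_enc.
apply: (@eq_from_nth _ (inr 0)).
  rewrite hs; case: ifP => [/andP [_ hin]|_]; last by rewrite size_prev_enc.
  by rewrite size_set_nth size_prev_enc; apply/esym/maxn_idPr; rewrite index_mem.
move=> k; rewrite hs => hk; rewrite nth_behead nth_prev_enc_cons //.
case: (boolP (is_param c && (c \in X))) => [/andP [-> hin]|hn].
  by rewrite nth_set_nth /=; case: (eqVneq (index c X) k) => [<-|].
case: ifP => // /andP [hp /eqP hi].
by move: hn; rewrite hp /= -index_mem hi hk.
Qed.

(* prev(X) from prev(cX): drop the first entry and reset to 0 the entries *)
(* that pointed back to it. *)
Definition slink (z : seq pc) : seq pc :=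
  mkseq (fun k => if nth (inr 0) z k.+1 == inr k.+1 then inr 0 else nth (inr 0) z k.+1)
        (size z).-1.

(* For [z = prev(cX)]: [c] if [c] is in Sigma, otherwise the distance to the *)
(* next occurrence of [c] in [X], or 0 if there is none. *)
Definition rslink_key (z : seq pc) : pc :=
  match z with
  | [::] => inr 0
  | inl s :: _ => inl s
  | inr _ :: _ =>
      head (inr 0) [seq (inr k : pc) | k <- iota 1 (size z).-1 & nth (inr 0) z k == inr k]
  end.

Definition rslink_word (a : pc) (x : seq pc) : seq pc :=
  match a with
  | inl s => inl s :: x
  | inr 0 => inr 0 :: x
  | inr d.+1 => inr 0 :: set_nth (inr 0) x d (inr d.+1)
  end.

Lemma slink_prev_enc_cons (c : pchar) X : slink (prev_enc (c :: X)) = prev_enc X.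
Proof.
apply: (@eq_from_nth _ (inr 0)); first by rewrite size_mkseq !size_prev_enc.
move=> k; rewrite size_mkseq size_prev_enc /= => hk.
rewrite nth_mkseq ?size_prev_enc // nth_prev_enc_cons //.
case: (boolP (is_param c && (index c X == k))) => [/andP [hp /eqP hi]|hn].
  rewrite eqxx (nth_prev_enc c) // -hi nth_index -?index_mem ?hi //.
  by case: c hp hi => // p _ hi; rewrite /Defs.prev_at -hi (negbTE (index_notin_take _ _)).
by rewrite (nth_prev_enc c) //; case: eqP => // /prev_at_inr_le; rewrite ltnn.
Qed.

Lemma rslink_key_prev_enc_cons (c : pchar) X : rslink_key (prev_enc (c :: X)) =
  match c with inl s => inl s | inr _ => if c \in X then inr (index c X).+1 else inr 0 end.
Proof.
case: c => [s|p]; first by rewrite prev_enc_cons_head.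
have E0 : prev_enc (inr p :: X) = inr 0 :: behead (prev_enc (inr p :: X)) :=
  prev_enc_cons_head _ _.
rewrite [in LHS]E0 {1}/rslink_key; cbv beta iota; rewrite -E0 size_prev_enc /=.
have E : {in iota 1 (size X), (fun k => nth (inr 0) (prev_enc (inr p :: X)) k == inr k)
             =1 pred1 (index (inr p) X).+1}.
  move=> [|k]; rewrite mem_iota // add1n ltnS => hk.
  rewrite nth_prev_enc_cons //= eqSS.
  case: (eqVneq (index (inr p) X) k) => [_|_]; first by rewrite eqxx.
  by apply/eqP; rewrite (nth_prev_enc (inr p)) // => /prev_at_inr_le; rewrite ltnn.
rewrite (eq_in_filter E); case: ifP => hin.
  by rewrite filter_pred1_uniq ?iota_uniq // mem_iota /= ltnS index_mem.
rewrite (_ : filter _ _ = [::]) //; apply/eqP; rewrite -size_eq0 size_filter.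
by apply/eqP/count_memPn; rewrite mem_iota memNindex ?hin // add1n ltnn andbF.
Qed.

Lemma rslink_word_prev_enc_cons (c : pchar) X :
  rslink_word (rslink_key (prev_enc (c :: X))) (slink (prev_enc (c :: X))) = prev_enc (c :: X).
Proof.
rewrite rslink_key_prev_enc_cons slink_prev_enc_cons [RHS]prev_enc_cons.
by case: c => [s|p] //=; case: ifP.
Qed.

Lemma prev_enc_cons_inj (c1 c2 : pchar) X1 X2
    (z1 := prev_enc (c1 :: X1)) (z2 := prev_enc (c2 :: X2)) :
  slink z1 = slink z2 -> rslink_key z1 = rslink_key z2 -> z1 = z2.
Proof.
move=> hs hk.
by rewrite -[z1]rslink_word_prev_enc_cons -[z2]rslink_word_prev_enc_cons hs hk.
Qed.

Lemma size_distinct_params (X : seq pchar) x0 (D : seq nat) : uniq D ->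
  {in D, forall d, is_param (nth x0 X d)} ->
  (forall d1 d2 : nat, d1 \in D -> d2 \in D -> d1 < d2 -> nth x0 X d1 != nth x0 X d2) ->
  size D <= #|P|.
Proof.
move=> uD hp hne; rewrite -(size_map (nth x0 X)) cardT -(size_map (@inr S P)).
apply: uniq_leq_size.
  rewrite map_inj_in_uniq // => d1 d2 h1 h2 he.
  by case: (ltngtP d1 d2) => // hlt; [move: (hne _ _ h1 h2 hlt) | move: (hne _ _ h2 h1 hlt)];
    rewrite he eqxx.
move=> y /mapP [d /hp]; case: (nth x0 X d) => // p _ ->.
by rewrite map_f ?mem_enum.
Qed.

Definition zero_pos (x : seq pc) : seq nat :=
  [seq d <- iota 0 (size x) | nth (inr 0) x d == inr 0].

Lemma size_zero_pos_prev_enc (X : seq pchar) : size (zero_pos (prev_enc X)) <= #|P|.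
Proof.
case: X => [|x0 X'] //; move: (x0 :: X') => X.
have hD d : d \in zero_pos (prev_enc X) ->
    d < size X /\ exists2 p, nth x0 X d = inr p & (inr p : pchar) \notin take d X.
  rewrite mem_filter mem_iota size_prev_enc => /andP [/eqP hz /andP [_ hd]]; split => //.
  move: hz; rewrite (nth_prev_enc x0) //; case: (nth x0 X d) => [s|p] //.
  by rewrite /Defs.prev_at; case: ifP => hin heq; [case: heq | exists p; rewrite ?hin].
apply: (@size_distinct_params X x0); first by rewrite filter_uniq ?iota_uniq.
  by move=> d /hD [_ [p ->]].
move=> d1 d2 /hD [hd1 _] /hD [hd2 [p2 e2 n2]] hlt; apply/eqP => he.
by move: n2; rewrite -e2 -he -(nth_take x0 hlt) mem_nth // size_takel // ltnW.
Qed.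

Definition is_inr (y : pc) : bool := if y is inr _ then true else false.

(* Positions of p-characters of the underlying string that do not occur again later. *)
Definition last_occ_pos (u : seq pc) : seq nat :=
  [seq j <- iota 0 (size u) | is_inr (nth (inr 0) u j) &&
     all (fun i => nth (inr 0) u i != inr (i - j)) (iota j.+1 (size u - j.+1))].

Lemma last_occ_posP u j : reflect [/\ j < size u, is_inr (nth (inr 0) u j) &
    forall i, j < i < size u -> nth (inr 0) u i != inr (i - j)] (j \in last_occ_pos u).
Proof.
rewrite mem_filter mem_iota add0n; apply: (iffP idP).
  move=> /andP [/andP [hi /allP ha] /andP [_ hj]]; split => // i hij.
  by apply: ha; rewrite mem_iota subnKC.
move=> [hj -> ha]; rewrite hj /= andbT; apply/allP => i; rewrite mem_iota => /andP [h1 h2].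
by apply: ha; rewrite h1 -(subnKC hj).
Qed.

Lemma prev_enc_next_occ (U : seq pchar) x0 j (c := nth x0 U j)
    (t := j.+1 + index c (drop j.+1 U)) :
  is_param c -> c \in drop j.+1 U -> t < size U /\ nth (inr 0) (prev_enc U) t = inr (t - j).
Proof.
move=> hp hcX; set X' := drop j.+1 U; have et : t = j.+1 + index c X' by [].
have hsX : size X' = size U - j.+1 by rewrite size_drop.
have ht : t < size U by move: hcX; rewrite -index_mem hsX; lia.
have hUt : nth x0 U t = c by rewrite /t -nth_drop nth_index.
split=> //; rewrite (nth_prev_enc x0) // hUt.
apply/(prev_at_eq_pos (c := c)) => //; try lia.
split; first by lia.
  by rewrite (_ : t - (t - j) = j) 1?(set_nth_default x0) //; lia.
move=> i hi; rewrite (set_nth_default x0); last by lia.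
have hlt : i - j.+1 < index c X' by lia.
have := before_find x0 hlt; rewrite nth_drop (_ : j.+1 + (i - j.+1) = i); last by lia.
by move=> hb he; move: hb; rewrite /= he eqxx.
Qed.

Lemma size_last_occ_pos_prev_enc (U : seq pchar) : size (last_occ_pos (prev_enc U)) <= #|P|.
Proof.
case: U => [|x0 U'] //; move: (x0 :: U') => U.
have hD j : j \in last_occ_pos (prev_enc U) -> [/\ j < size U, is_param (nth x0 U j) &
    forall i, j < i < size U -> nth (inr 0) (prev_enc U) i != inr (i - j)].
  move=> /last_occ_posP [hj hi ha]; rewrite size_prev_enc in hj ha; split => //.
  by move: hi; rewrite (nth_prev_enc x0) //; case: (nth x0 U j).
apply: (@size_distinct_params U x0); first by rewrite filter_uniq ?iota_uniq.
  by move=> j /hD [].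
move=> j1 j2 /hD [hj1 hp ha] /hD [hj2 _ _] hlt; apply/eqP => he.
have hc : nth x0 U j1 \in drop j1.+1 U.
  have hsX : size (drop j1.+1 U) = size U - j1.+1 by rewrite size_drop.
  by rewrite he -(subnKC hlt) -nth_drop mem_nth // hsX; lia.
have [ht hnext] := prev_enc_next_occ hp hc.
have hjt : j1 < j1.+1 + index (nth x0 U j1) (drop j1.+1 U) < size U by rewrite ht andbT; lia.
by move: (ha _ hjt); rewrite hnext eqxx.
Qed.

Lemma prev_at_last_occ (Y : seq pchar) t p d : t < size Y ->
  prev_at Y t (inr p) = inr d.+1 -> t - d.+1 \in last_occ_pos (prev_enc (take t Y)).
Proof.
move=> ht /prev_at_eq_pos => /(_ (ltnW ht) (ltn0Sn _) erefl) [hd hYj hbet].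
have hsu : size (prev_enc (take t Y)) = t by rewrite size_prev_enc size_takel // ltnW.
have hnu i : i < t -> nth (inr 0) (prev_enc (take t Y)) i = prev_at Y i (nth (inr p) Y i).
  move=> hi; rewrite (nth_prev_enc (inr p)); last by rewrite size_takel // ltnW.
  by rewrite nth_take // prev_at_take // ltnW.
apply/last_occ_posP; rewrite hsu hnu; last by lia.
rewrite hYj; have [d' ->] := prev_at_inr Y (t - d.+1) p; split => //; first by lia.
move=> i hi; rewrite hnu; last by lia.
apply/eqP; case Ei: (nth (inr p) Y i) => [s|p'] //.
move/prev_at_eq_pos => /(_ _ _ erefl) [||_ hYj' _]; try lia.
apply: (hbet i); first by lia.
have hj : i - (i - (t - d.+1)) = t - d.+1 by lia.
by rewrite Ei -hYj' hj (set_nth_default (inr p)) ?hYj //; apply: leq_ltn_trans (leq_subr _ _) ht.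
Qed.

End PrevEncoding.

(** * The trees PPH(T[i..]) *)

Section SequenceHashTree.
Variable S : finType.
Local Notation pc := (pc S).

Definition prefix_closed (N : seq (seq pc)) := forall z, z \in N -> forall k, take k z \in N.

Definition sht_depth (N : seq (seq pc)) (s : seq pc) : nat :=
  find (fun k => take k s \notin N) (iota 0 (size s).+1).

Lemma sht_insertE N s : sht_insert N s = rcons N (take (sht_depth N s) s).
Proof. by []. Qed.

Lemma sht_depthP N s : [::] \in N -> prefix_closed N -> s \notin N ->
  0 < sht_depth N s <= size s /\
  forall k, k <= size s -> (take k s \in N) = (k < sht_depth N s).
Proof.
move=> h0 hN hs; set a := fun k => take k s \notin N; set f := sht_depth N s.
have hh : has a (iota 0 (size s).+1).
  by apply/hasP; exists (size s); rewrite ?mem_iota ?ltnSn // /a take_size.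
have hlt : f < (size s).+1 by rewrite -[X in _ < X](size_iota 0) -has_find.
have hnf : take f s \notin N by have := nth_find 0 hh; rewrite nth_iota.
have hbf k : k < f -> take k s \in N.
  move=> hk; have := before_find 0 hk; rewrite nth_iota; [|exact: ltn_trans hk hlt].
  by rewrite add0n /a /= => /negbFE.
split=> [|k hk].
  rewrite -[f <= _]ltnS hlt andbT lt0n; apply: contraNneq hnf => ->.
  by rewrite take0.
apply/idP/idP => [hin|/hbf //]; rewrite ltnNge; apply: contraNN hnf => hfk.
by rewrite -(take_takel _ hfk) hN.
Qed.
End SequenceHashTree.

Section Tree.
Variables S P : finType.
Local Notation pchar := (pchar S P).
Local Notation pc := (pc S).
Variable T : seq pchar.
Local Notation n := (size T).

(* After [m] steps the tree is PPH(T[n-m+1..]), last extended with *)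
(* [suffix_prev m = prev(T[n-m+1..])]; [last_node m] is the node v_{n-m+1}. *)
Definition tree m := PPH T (n - m).+1.
Definition suffix_prev m := prev_enc (drop (n - m) T).
Definition last_node m := last [::] (tree m).
Definition new_depth m := sht_depth (tree m) (suffix_prev m.+1).

Lemma tree0 : tree 0 = [:: [::]].
Proof. by rewrite /tree /PPH subn0 subnn. Qed.

Lemma treeS m : m < n -> tree m.+1 = sht_insert (tree m) (suffix_prev m.+1).
Proof.
move=> hm; rewrite /tree /PPH subnSK // (_ : n.+1 - (n - m) = m.+1); last by lia.
rewrite (_ : n.+1 - (n - m).+1 = m); last by lia.
rewrite [iota (n - m) _]/= rev_cons map_rcons /sht foldl_rcons -/(sht _).
by rewrite /suffix_prev (_ : (n - m).-1 = n - m.+1) //; lia.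
Qed.

Lemma size_suffix_prev m : m <= n -> size (suffix_prev m) = m.
Proof. by move=> hm; rewrite size_prev_enc size_drop; lia. Qed.

Lemma drop_suffix_cons m : m < n -> exists c, drop (n - m.+1) T = c :: drop (n - m) T.
Proof.
move=> hm; case E: (drop (n - m.+1) T) => [|c X].
  by move: (congr1 size E); rewrite size_drop /=; lia.
exists c; congr (_ :: _).
have -> : n - m = 1 + (n - m.+1) by lia.
by rewrite -drop_drop E /= drop0.
Qed.

Lemma slink_take_suffix_prev m k : m < n ->
  slink (take k.+1 (suffix_prev m.+1)) = take k (suffix_prev m).
Proof.
move=> hm; have [c Ec] := drop_suffix_cons hm.
by rewrite /suffix_prev Ec !take_prev_enc /= slink_prev_enc_cons.
Qed.

Record tree_inv m : Prop := TreeInv {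
  tree_root : tree m = [::] :: behead (tree m);
  tree_uniq : uniq (tree m);
  tree_prefix_closed : prefix_closed (tree m);
  tree_node_prefix : forall z, z \in tree m ->
    exists2 j, n - m <= j & z = take (size z) (prev_enc (drop j T));
  last_node_in : last_node m \in tree m;
  last_node_prefix : take (size (last_node m)) (suffix_prev m) = last_node m }.

Lemma root_in_tree m : tree_inv m -> [::] \in tree m.
Proof. by case=> E *; rewrite E mem_head. Qed.

Lemma size_tree_node m z : tree_inv m -> z \in tree m -> size z <= m.
Proof.
move=> hI /(tree_node_prefix hI) [j hj ->].
by rewrite size_take_min size_prev_enc size_drop; lia.
Qed.

Lemma suffix_prev_notin_tree m : m < n -> tree_inv m -> suffix_prev m.+1 \notin tree m.
Proof.
by move=> hm hI; apply/negP => /(size_tree_node hI); rewrite size_suffix_prev ?ltnn.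
Qed.

Lemma new_depthP m : m < n -> tree_inv m ->
  0 < new_depth m <= m.+1 /\
  forall k, k <= m.+1 -> (take k (suffix_prev m.+1) \in tree m) = (k < new_depth m).
Proof.
move=> hm hI.
have := sht_depthP (root_in_tree hI) (tree_prefix_closed hI) (suffix_prev_notin_tree hm hI).
by rewrite size_suffix_prev.
Qed.

Lemma last_nodeS m : m < n -> last_node m.+1 = take (new_depth m) (suffix_prev m.+1).
Proof. by move=> hm; rewrite /last_node treeS // sht_insertE last_rcons. Qed.

Lemma tree_invP m : m <= n -> tree_inv m.
Proof.
elim: m => [_|m IH hm].
  split; rewrite /last_node ?tree0 //.
  - by move=> z; rewrite inE => /eqP -> k; rewrite inE.
  - by move=> z; rewrite inE => /eqP ->; exists n; rewrite ?subn0 ?take0.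
  - by rewrite take0.
have hI := IH (ltnW hm); have [/andP [f0 fs] hf] := new_depthP hm hI.
set f := new_depth m in f0 fs hf; set w := take f (suffix_prev m.+1).
have ET : tree m.+1 = rcons (tree m) w by rewrite treeS.
have Ev : last_node m.+1 = w by rewrite last_nodeS.
have hw : size w = f by rewrite size_takel // size_suffix_prev.
have hwN : w \notin tree m by rewrite hf ?ltnn.
split; rewrite ?Ev ?ET.
- by rewrite (tree_root hI).
- by rewrite rcons_uniq hwN tree_uniq.
- move=> z; rewrite mem_rcons inE => /orP [/eqP ->|hz] k; rewrite mem_rcons inE.
    case: (leqP f k) => hk; first by rewrite take_taker ?hw ?eqxx.
    have hkm : k <= m.+1 by lia.
    by rewrite /w take_takel 1?ltnW // (hf _ hkm) hk orbT.
  by rewrite tree_prefix_closed ?orbT.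
- move=> z; rewrite mem_rcons inE => /orP [/eqP ->|/(tree_node_prefix hI) [j hj hz]].
    by exists (n - m.+1); rewrite ?hw.
  by exists j => //; lia.
- by rewrite mem_rcons mem_head.
- by rewrite hw.
Qed.

Lemma tree_last m : 0 < m <= n -> tree m = rcons (tree m.-1) (last_node m).
Proof. by case: m => // m /= hm; rewrite treeS // sht_insertE last_nodeS. Qed.

Lemma last_node_fresh m : 0 < m <= n -> last_node m \notin tree m.-1.
Proof.
move=> hm; have := tree_uniq (tree_invP (proj2 (andP hm))).
by rewrite tree_last // rcons_uniq => /andP [].
Qed.

Lemma take_last_node m k : m <= n -> k <= size (last_node m) ->
  take k (last_node m) = take k (suffix_prev m).
Proof. by move=> hm hk; rewrite -(last_node_prefix (tree_invP hm)) take_takel. Qed.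

(* This is why the walk is short: the suffix link of the inserted node is *)
(* already a node, hence a prefix of the previous node. *)
Lemma new_depth_le_closed m : m < n -> {in tree m.-1, forall z, slink z \in tree m.-1} ->
  new_depth m <= (size (last_node m)).+1.
Proof.
move=> hm hcl; have hI := tree_invP (ltnW hm); have [_ hf] := new_depthP hm hI.
have hv : size (last_node m) <= m by apply: size_tree_node (last_node_in hI).
rewrite leqNgt -hf; last by lia.
apply/negP => hx; set x := take _ (suffix_prev m.+1) in hx.
have hsx : size x = (size (last_node m)).+1 by rewrite size_takel // size_suffix_prev //; lia.
have hxv : slink x = last_node m by rewrite slink_take_suffix_prev // (last_node_prefix hI).
have [m0|mpos] := posnP m.
  by move: hx hsx; rewrite [in tree m]m0 tree0 inE => /eqP ->.
have hm' : 0 < m <= n by rewrite mpos ltnW.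
move: hx; rewrite tree_last // mem_rcons inE => /orP [/eqP hxv'|hx].
  by move: hsx; rewrite hxv'; lia.
by move: (last_node_fresh hm'); rewrite -hxv hcl.
Qed.

Lemma tree_slink_closed m : m <= n -> {in tree m, forall z, slink z \in tree m}.
Proof.
elim/ltn_ind: m => -[_ _ z|m IH hm]; first by rewrite tree0 inE => /eqP ->.
have hI := tree_invP (ltnW hm); have [/andP [f0 _] _] := new_depthP hm hI.
have hf : new_depth m <= (size (last_node m)).+1 by apply: new_depth_le_closed; try apply: IH; lia.
move=> z; rewrite tree_last // !mem_rcons !inE => /orP [/eqP ->|hz]; last first.
  by rewrite (IH m) ?orbT ?ltnSn 1?ltnW.
rewrite last_nodeS // -(prednK f0) slink_take_suffix_prev // -take_last_node; [|exact: ltnW|lia].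
by rewrite (tree_prefix_closed hI) ?orbT // (last_node_in hI).
Qed.

Lemma new_depth_le m : m < n -> new_depth m <= (size (last_node m)).+1.
Proof. by move=> hm; apply: new_depth_le_closed => //; apply: tree_slink_closed; lia. Qed.
End Tree.

(** * Reversed suffix links and next occurrences *)

Section NextOccurrence.
Variable P : finType.

Lemma lookup_next_cons (e : P * nat) nx p :
  lookup_next (e :: nx) p = if e.1 == p then Some e.2 else lookup_next nx p.
Proof. by rewrite /lookup_next /=; case: eqP. Qed.

Lemma lookup_update_next (nx : seq (P * nat)) p q p' :
  lookup_next (update_next nx p q) p' = if p == p' then Some q else lookup_next nx p'.
Proof.
rewrite /update_next lookup_next_cons /=; case: eqP => // /eqP hne.
elim: nx => [|e nx IH] //=; case: ifP => he; first by rewrite !lookup_next_cons IH.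
by move/negbFE/eqP: he => ep; rewrite lookup_next_cons ep (negbTE hne) IH.
Qed.

Lemma uniq_update_next (nx : seq (P * nat)) p q :
  uniq (map fst nx) -> uniq (map fst (update_next nx p q)).
Proof.
move=> unx; rewrite /= (subseq_uniq (map_subseq _ (filter_subseq _ _)) unx) andbT.
by apply/mapP => -[e]; rewrite mem_filter => /andP [/negbTE he _] ep; move: he; rewrite -ep eqxx.
Qed.

Lemma size_update_next (nx : seq (P * nat)) p q : size (update_next nx p q) <= (size nx).+1.
Proof. by rewrite /= ltnS size_filter count_size. Qed.
End NextOccurrence.

Section Links.
Variables S P : finType.
Local Notation pchar := (pchar S P).
Local Notation pc := (pc S).
Variable T : seq pchar.
Local Notation n := (size T).
Local Notation tree := (tree T).
Local Notation suffix_prev := (suffix_prev T).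

Definition rslink_of (z : seq pc) : seq pc * pc * seq pc := (slink z, rslink_key z, z).
Definition rslinks (N : seq (seq pc)) := map rslink_of (behead N).

Lemma tree_node_prev m w : m <= n -> w \in tree m ->
  exists Y : seq pchar, w = prev_enc Y /\ size Y = size w.
Proof.
move=> hm /(tree_node_prefix (tree_invP hm)) [j _ Ew].
exists (take (size w) (drop j T)); rewrite {1}Ew take_prev_enc; split=> //.
by rewrite -size_prev_enc -take_prev_enc -Ew.
Qed.

Lemma tree_node_cons m z : m <= n -> z \in behead (tree m) ->
  exists (c : pchar) X, z = prev_enc (c :: X).
Proof.
move=> hm hz; have hI := tree_invP hm.
have hz' : z \in tree m by rewrite (tree_root hI) in_cons hz orbT.
have [Y [Ez _]] := tree_node_prev hm hz'.
case: Y Ez => [|c X] Ez; last by exists c, X.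
have E0 : @prev_enc S P [::] = [::] by [].
by have := tree_uniq hI; rewrite (tree_root hI) cons_uniq -E0 -Ez hz.
Qed.

Lemma rslink_in_tree m k : m < n -> k <= m ->
  let w := take k.+1 (suffix_prev m.+1) in
  let L := rslinks (tree m) in
  has_link L (take k (suffix_prev m)) (rslink_key w) = (w \in tree m) /\
  (w \in tree m -> link_tgt L (take k (suffix_prev m)) (rslink_key w) = w).
Proof.
move=> hm hk w L; have [c Ec] := drop_suffix_cons hm.
set x := take k (suffix_prev m); set a := rslink_key w.
set p := fun z => (slink z == x) && (rslink_key z == a).
have hw : w = prev_enc (c :: take k (drop (n - m) T)).
  by rewrite /w /suffix_prev Ec take_prev_enc.
have E : {in behead (tree m), p =1 pred1 w}.
  move=> z hz /=; rewrite /p; case: (eqVneq z w) => [->|hne].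
    by rewrite /x -slink_take_suffix_prev // !eqxx.
  apply/negbTE/negP => /andP [/eqP h1 /eqP h2]; move/eqP: hne; apply.
  have [c' [X' Ez]] := tree_node_cons (ltnW hm) hz.
  rewrite Ez hw; apply: prev_enc_cons_inj; rewrite -Ez -hw //.
  by rewrite h1 /x -slink_take_suffix_prev.
have hin : (w \in tree m) = (w \in behead (tree m)).
  by rewrite [in LHS](tree_root (tree_invP (ltnW hm))) inE hw /prev_enc.
have hhas : has_link L x a = (w \in tree m).
  by rewrite /has_link has_map hin -has_pred1 -(eq_in_has E).
split=> // hwN.
have hh : has p (behead (tree m)) by rewrite (eq_in_has E) has_pred1 -hin.
have hi : find p (behead (tree m)) < size (behead (tree m)) by rewrite -has_find.
rewrite /link_tgt find_map (nth_map [::] _ _ hi) /=.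
by have /esym/eqP := E _ (mem_nth [::] hi); rewrite (nth_find [::] hh).
Qed.

(* Positions are 1-indexed, as in the algorithm. *)
Definition next_spec m (nx : seq (P * nat)) := forall p, lookup_next nx p =
  if (inr p : pchar) \in drop (n - m) T
  then Some (n - m + 1 + index (inr p : pchar) (drop (n - m) T)) else None.

Lemma key_at_take_suffix_prev m (st : state S P) c k : m < n ->
  drop (n - m.+1) T = c :: drop (n - m) T -> next_spec m (st_next st) -> k <= m ->
  key_at st (n - m) c (take k (suffix_prev m)) = rslink_key (take k.+1 (suffix_prev m.+1)).
Proof.
move=> hm Ec hnx hk.
have hsz : size (take k (suffix_prev m)) = k by rewrite size_takel // size_suffix_prev // ltnW.
have -> : take k.+1 (suffix_prev m.+1) = prev_enc (c :: take k (drop (n - m) T)).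
  by rewrite /suffix_prev Ec take_prev_enc.
rewrite rslink_key_prev_enc_cons.
case: c Ec => [s|p] Ec //; rewrite /key_at hnx hsz.
set X := drop (n - m) T; case: ifP => hin; last first.
  by rewrite (_ : _ \in take k X = false) //; apply: contraFF hin => /mem_take.
have -> : n - m + 1 + index (inr p : pchar) X - (n - m) = (index (inr p : pchar) X).+1.
  by lia.
by rewrite in_take //; case: ifP => // hi; rewrite index_take.
Qed.

Lemma next_spec_step m nx c : m < n -> drop (n - m.+1) T = c :: drop (n - m) T ->
  next_spec m nx ->
  next_spec m.+1 (match c with inl _ => nx | inr p => update_next nx p (n - m) end).
Proof.
move=> hm Ec hnx p'; rewrite Ec in_cons [index _ (_ :: _)]/=.
case: c {Ec} => [s|p] /=; first by rewrite hnx; case: ifP => // _; congr Some; lia.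
rewrite lookup_update_next; case: (eqVneq p p') => [<-|hne].
  by rewrite eqxx /=; congr Some; lia.
have hne' : (inr p == inr p' :> pchar) = false by apply: contraNF hne => /eqP [->].
by rewrite hnx eq_sym hne' /=; case: ifP => // _; congr Some; lia.
Qed.
End Links.

(** * Sizes of the search trees *)

Section Degree.
Variables S P : finType.
Local Notation pchar := (pchar S P).
Local Notation pc := (pc S).
Variable T : seq pchar.
Local Notation n := (size T).
Local Notation tree := (tree T).

(* The keys of the links leaving [x = prev_enc X0] are Sigma-characters, 0, or *)
(* [d + 1] for a position [d] at which [x] is 0. *)
Lemma nlinks_rslinks_le m x : m <= n -> nlinks (rslinks (tree m)) x <= #|S| + #|P| + 1.
Proof.
move=> hm; have uB : uniq (behead (tree m)).
  by move: (tree_uniq (tree_invP hm)); rewrite (tree_root (tree_invP hm)) => /andP [].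
rewrite /nlinks count_map -size_filter; set Z := filter _ _.
have hZ z : z \in Z -> slink z = x /\ exists (c : pchar) X, z = prev_enc (c :: X).
  by rewrite mem_filter /= => /andP [/eqP ht /(tree_node_cons hm)].
case EZ: Z => [|z0 Z'] //; rewrite -EZ.
have [ht0 [c0 [X0 E0]]] : slink z0 = x /\ exists (c : pchar) X, z0 = prev_enc (c :: X).
  by apply: hZ; rewrite EZ mem_head.
have hx : x = prev_enc X0 by rewrite -ht0 E0 slink_prev_enc_cons.
pose K := [seq (inl s : pc) | s <- enum S] ++
  (inr 0 : pc) :: [seq (inr d.+1 : pc) | d <- zero_pos (prev_enc X0)].
rewrite -(size_map (@rslink_key S) Z).
apply: leq_trans (uniq_leq_size (s2 := K) _ _) _.
- rewrite map_inj_in_uniq ?filter_uniq // => z1 z2 /hZ [t1 [c1 [X1 e1]]] /hZ [t2 [c2 [X2 e2]]].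
  by rewrite e1 e2 => hk; apply: prev_enc_cons_inj; rewrite // -e1 -e2 t1 t2.
- move=> k /mapP [z /hZ [tz [c [X ez]]] ->].
  have hXX : prev_enc X = prev_enc X0 by rewrite -(slink_prev_enc_cons c) -ez tz hx.
  rewrite ez rslink_key_prev_enc_cons mem_cat; case: c ez => [s|p] ez.
    by rewrite map_f ?mem_enum.
  rewrite inE; case: ifP => hin; last by rewrite eqxx orbT.
  apply/orP; right; apply/orP; right; apply: map_f.
  have hsX : size X = size X0 by rewrite -(size_prev_enc X) hXX size_prev_enc.
  rewrite mem_filter mem_iota size_prev_enc -hsX index_mem hin andbT.
  rewrite -hXX (nth_prev_enc (inr p)) ?index_mem // nth_index //.
  by rewrite /prev_at (negbTE (index_notin_take _ _)).
- rewrite size_cat !size_map -enumT -cardT /= addnS addn1 ltnS leq_add2l size_map.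
  exact: size_zero_pos_prev_enc.
Qed.

(* A child [rcons u y] is determined by its label [y], which is a Sigma-character, *)
(* 0, or a back-pointer to a last occurrence of a p-character in [u]. *)
Lemma nchildren_tree_le m u : m <= n -> nchildren (tree m) u <= #|S| + #|P| + 1.
Proof.
move=> hm; have hI := tree_invP hm.
rewrite /nchildren -size_filter; set Ch := filter _ _.
have hCh w : w \in Ch -> [/\ size w = (size u).+1, take (size u) w = u & w \in tree m].
  by rewrite mem_filter => /andP [/andP [/eqP -> /eqP ->] ->].
case ECh: Ch => [|w0 Ch'] //; rewrite -ECh.
have [hs0 ht0 hn0] : [/\ size w0 = (size u).+1, take (size u) w0 = u & w0 \in tree m].
  by apply: hCh; rewrite ECh mem_head.
have [Y0 [eY0 _]] := tree_node_prev hm hn0.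
have hu : u = prev_enc (take (size u) Y0) by rewrite -{1}ht0 eY0 take_prev_enc.
pose K := [seq (inl s : pc) | s <- enum S] ++
  (inr 0 : pc) :: [seq (inr (size u - j) : pc) | j <- last_occ_pos u].
rewrite -(size_map (fun w => nth (inr 0) w (size u)) Ch).
apply: leq_trans (uniq_leq_size (s2 := K) _ _) _.
- have hr w : w \in Ch -> w = rcons u (nth (inr 0) w (size u)).
    move=> /hCh [hs ht _]; rewrite -{1}ht -take_nth ?take_oversize // hs //.
  rewrite map_inj_in_uniq ?filter_uniq ?(tree_uniq hI) // => w1 w2 h1 h2 he.
  by rewrite (hr _ h1) (hr _ h2) he.
- move=> y /mapP [w /hCh [hs ht hn] ->].
  have [Y [eY sY]] := tree_node_prev hm hn.
  have hsY : size u < size Y by rewrite sY hs.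
  have hu' : u = prev_enc (take (size u) Y) by rewrite -{1}ht eY take_prev_enc.
  have [x0 _] : exists x0 : pchar, true by case: (Y) hsY => [|y0 ?] //; exists y0.
  rewrite eY (nth_prev_enc x0) // mem_cat inE.
  case: (nth x0 Y (size u)) => [s|p]; first by rewrite prev_at_inl map_f ?mem_enum.
  have [[|d] ev] := prev_at_inr Y (size u) p; rewrite ev ?eqxx ?orbT //.
  apply/orP; right; apply/orP; right.
  have hd : d.+1 <= size u by apply: prev_at_inr_le ev.
  rewrite (_ : d.+1 = size u - (size u - d.+1)); last by lia.
  by rewrite map_f //; have := prev_at_last_occ hsY ev; rewrite -hu'.
- rewrite size_cat !size_map -enumT -cardT /= addnS addn1 ltnS leq_add2l size_map hu.
  exact: size_last_occ_pos_prev_enc.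
Qed.
End Degree.

(** * One step of the algorithm *)

Section StepCost.
Variables S P : finType.
Local Notation pchar := (pchar S P).

(* [walk_top] is the ancestor v'_i of the paper, [walk_at_bot] says that it is *)
(* the auxiliary parent of the root, and [walk_target] is u_i. *)
Definition walk_len (st : state S P) q (c : pchar) : nat :=
  find (fun x => has_link (st_links st) x (key_at st q c x)) (anc (last [::] (st_nodes st))).

Definition walk_at_bot (st : state S P) q (c : pchar) : bool :=
  walk_len st q c == size (anc (last [::] (st_nodes st))).
Definition walk_top (st : state S P) q (c : pchar) : seq (pc S) :=
  nth [::] (anc (last [::] (st_nodes st))) (walk_len st q c).
Definition walk_target (st : state S P) q (c : pchar) : seq (pc S) :=
  if walk_at_bot st q c then [::]
  else link_tgt (st_links st) (walk_top st q c)
         (if walk_at_bot st q c then key_bot c else key_at st q c (walk_top st q c)).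

Lemma leq_bst a b : a <= b -> bst a <= bst b.
Proof. by move=> h; rewrite /bst ltnS leq_trunc_log. Qed.


Lemma step_cost_le T q c (st : state S P) K :
  uniq (st_bot st) -> uniq (map fst (st_next st)) ->
  (forall x, nlinks (st_links st) x <= K) -> (forall u, nchildren (st_nodes st) u <= K) ->
  #|S| < K -> #|P| <= K -> (step T q c st).2 <= (walk_len st q c + 6) * bst K.
Proof.
move=> ubot unx hL hC hS hP; rewrite /step /= -/(walk_len st q c).
set B := bst K.
have huniq (b : seq S) : uniq b -> bst (size b).+1 <= B.
  by move=> ub; apply: leq_bst; apply: leq_trans hS; rewrite ltnS -(card_uniqP ub) max_card.
rewrite (_ : (walk_len st q c + 6) * B = (walk_len st q c).+1 * B + B + B + B + B + B);
  last by rewrite -addSnnS !mulnDl; lia.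
repeat apply: leq_add.
- apply: leq_trans (sumn_le _) _ => [_ /mapP [x _ ->]|]; first exact: leq_bst.
  by rewrite size_map leq_mul2r size_take_min geq_minl orbT.
- by case: ifP => // _; apply: huniq; case: (c) => [s|p] //; case: ifP => //= ->.
- exact: leq_bst.
- exact: leq_bst.
- apply: leq_bst; apply: leq_trans hP.
  by rewrite -(size_map fst) -(card_uniqP unx) max_card.
- exact: leq_trans (leq_bst (leqnSn _)) (huniq _ ubot).
Qed.
End StepCost.


Lemma size_anc (S : finType) (v : seq (pc S)) : size (anc v) = (size v).+1.
Proof. by rewrite /anc size_map size_rev size_iota. Qed.

Lemma nth_anc (S : finType) (v : seq (pc S)) k : k <= size v ->
  nth [::] (anc v) k = take (size v - k) v.
Proof.
move=> hk; rewrite /anc (nth_map 0) ?size_rev ?size_iota // nth_rev ?size_iota //.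
by rewrite nth_iota; [congr take | ]; lia.
Qed.

Section Step.
Variables S P : finType.
Local Notation pchar := (pchar S P).
Local Notation pc := (pc S).
Variable T : seq pchar.
Local Notation n := (size T).
Local Notation tree := (tree T).
Local Notation suffix_prev := (suffix_prev T).
Local Notation last_node := (last_node T).
Local Notation new_depth := (new_depth T).

Record state_inv m (st : state S P) : Prop := StateInv {
  st_nodesE : st_nodes st = tree m;
  st_linksE : st_links st = rslinks (tree m);
  st_nextE : next_spec T m (st_next st);
  st_next_uniq : uniq (map fst (st_next st));
  size_st_next : size (st_next st) <= m;
  st_bot_uniq : uniq (st_bot st);
  size_st_bot : size (st_bot st) <= m }.

Variables (m : nat) (st : state S P) (c : pchar).
Hypotheses (hm : m < n) (hst : state_inv m st) (Ec : drop (n - m.+1) T = c :: drop (n - m) T).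

Local Notation v := (last_node m).
Local Notation f := (new_depth m).

Lemma st_last_node : last [::] (st_nodes st) = v.
Proof. by rewrite (st_nodesE hst). Qed.

Lemma size_last_node_le : size v <= m.
Proof. by have hI := tree_invP (ltnW hm); apply: size_tree_node (last_node_in hI). Qed.

Lemma new_depth_bounds : 0 < f <= (size v).+1.
Proof.
by have [/andP [-> _] _] := new_depthP hm (tree_invP (ltnW hm)); rewrite new_depth_le.
Qed.

Lemma key_at_take_last_node k : k <= size v ->
  key_at st (n - m) c (take k v) = rslink_key (take k.+1 (suffix_prev m.+1)).
Proof.
move=> hk; have hv := size_last_node_le.
rewrite take_last_node; [|exact: ltnW|done].
by apply: (key_at_take_suffix_prev hm Ec (st_nextE hst)); lia.
Qed.

(* The link is found iff the extension by one character of the ancestor, *)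
(* along the new suffix, is already a node. *)
Lemma has_link_anc i : i <= size v ->
  has_link (st_links st) (nth [::] (anc v) i) (key_at st (n - m) c (nth [::] (anc v) i)) =
  ((size v - i).+1 < f).
Proof.
move=> hi; have hv := size_last_node_le.
rewrite (st_linksE hst) nth_anc // key_at_take_last_node ?leq_subr //.
rewrite take_last_node ?leq_subr //; last exact: ltnW.
have hk : size v - i <= m by lia.
have [-> _] := rslink_in_tree hm hk.
by have [_ ->] := new_depthP hm (tree_invP (ltnW hm)); lia.
Qed.

Lemma walk_lenE : walk_len st (n - m) c = (size v).+1 - f.-1.
Proof.
have := new_depth_bounds; rewrite /walk_len st_last_node => hf.
apply: (@find_eq _ [::]) => [|k hk|]; rewrite ?size_anc ?leq_subr //.
  by rewrite has_link_anc -?leqNgt; lia.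
by move=> hk; rewrite has_link_anc; lia.
Qed.

Lemma walk_targetE : walk_target st (n - m) c = take f.-1 (suffix_prev m.+1).
Proof.
have hf := new_depth_bounds; have hv := size_last_node_le.
rewrite /walk_target /walk_at_bot /walk_top walk_lenE st_last_node size_anc (st_linksE hst).
case: (ltnP 1 f) => hf1; last by rewrite (_ : f = 1) ?subn0 ?eqxx ?take0 //; lia.
have -> : ((size v).+1 - f.-1 == (size v).+1) = false by apply/eqP; lia.
rewrite nth_anc; last by lia.
rewrite (_ : size v - ((size v).+1 - f.-1) = f.-2); last by lia.
rewrite key_at_take_last_node; last by lia.
rewrite take_last_node; [|exact: ltnW|lia].
have hk : f.-2 <= m by lia.
have [_ ->] := rslink_in_tree hm hk; first by congr take; lia.
by have [_ ->] := new_depthP hm (tree_invP (ltnW hm)); lia.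
Qed.

Lemma step_state_inv : state_inv m.+1 (step T (n - m) c st).1.
Proof.
rewrite /step /= -/(walk_len st (n - m) c) -/(walk_at_bot st (n - m) c) -/(walk_top st (n - m) c).
rewrite -/(walk_target st (n - m) c).
have /andP [f0 hf] := new_depth_bounds; have hv := size_last_node_le.
have -> : (n - m).-1 = n - m.+1 by lia.
rewrite -/(suffix_prev m.+1) walk_targetE size_takel ?size_suffix_prev //; try lia.
rewrite -take_nth; last by rewrite size_suffix_prev //; lia.
rewrite prednK //.
rewrite st_last_node walk_lenE (_ : (size v).+1 - ((size v).+1 - f.-1) = f.-1); last by lia.
rewrite key_at_take_last_node; last by lia.
rewrite take_last_node; [|exact: ltnW|lia].
have -> : take f.-1 (suffix_prev m) = slink (take f (suffix_prev m.+1)).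
  by rewrite -{2}(prednK f0) slink_take_suffix_prev.
have ET : tree m.+1 = rcons (tree m) (take f (suffix_prev m.+1)) by rewrite treeS.
case: hst => EN EL hnx unx snx ubot sbot; split => /=.
- by rewrite EN ET.
- by rewrite EL ET /rslinks prednK // {2}(tree_root (tree_invP (ltnW hm))) /= map_rcons.
- exact: next_spec_step.
- by case: (c) => [s|p] //=; apply: uniq_update_next.
- by case: (c) => [s|p] /=; [apply: leq_trans snx _ | apply: leq_trans (size_update_next _ _ _) _].
- by case: (c) => [s|p] //=; case: ifP => //= ->.
- case: (c) => [s|p] /=; last exact: leq_trans sbot _.
  by case: ifP => _ /=; [apply: leq_trans sbot _ | rewrite ltnS].
Qed.

Lemma step_cost_amortized (B := bst (#|S| + #|P| + 1)) :
  (step T (n - m) c st).2 + B * size (last_node m.+1) <= B * (size (last_node m) + 8).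
Proof.
have /andP [f0 hf] := new_depth_bounds; have hv := size_last_node_le.
have hS : #|S| < #|S| + #|P| + 1 by lia.
have hP : #|P| <= #|S| + #|P| + 1 by lia.
case: hst => EN EL _ unx _ ubot _.
have := step_cost_le T (n - m) c ubot unx _ _ hS hP.
rewrite EL EN walk_lenE last_nodeS // size_takel ?size_suffix_prev //; last by lia.
move=> /(_ (fun x => nlinks_rslinks_le x (ltnW hm)) (fun u => nchildren_tree_le u (ltnW hm))) h.
rewrite (_ : size v + 8 = ((size v).+1 - f.-1 + 6) + f); last by lia.
by rewrite mulnDr leq_add2r mulnC.
Qed.
End Step.

(** * The whole run *)

Lemma bst_succ_le x : 0 < x -> bst (x + 1) <= 3 * (trunc_log 2 x).+1.
Proof.
move=> hx; rewrite /bst addn1.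
have h4 : x.+2 <= 2 * (2 * x) by lia.
have := leq_trunc_log 2 h4; rewrite !trunc_logMp // ?muln_gt0 //; lia.
Qed.

Section Run.
Variables S P : finType.
Local Notation pchar := (pchar S P).
Variable T : seq pchar.
Local Notation n := (size T).
Local Notation B := (bst (#|S| + #|P| + 1)).

Lemma runS m c : m < n -> drop (n - m.+1) T = c :: drop (n - m) T ->
  run T m.+1 = ((step T (n - m) c (run T m).1).1, (run T m).2 + (step T (n - m) c (run T m).1).2).
Proof.
move=> hm Ec; rewrite /= (_ : (n - m).-1 = n - m.+1) ?Ec; last by lia.
by case: (run T m) => st cst /=; case: (step T (n - m) c st).
Qed.

Lemma size_tree m : m <= n -> size (tree T m) = m.+1.
Proof.
elim: m => [|m IH] hm; first by rewrite tree0.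
by rewrite treeS // sht_insertE size_rcons IH // ltnW.
Qed.

Lemma run_inv m : m <= n ->
  state_inv T m (run T m).1 /\ (run T m).2 + B * size (last_node T m) <= 8 * B * m.
Proof.
elim: m => [_|m IH hm].
  split; last by rewrite /last_node tree0 /= !muln0.
  by split; rewrite //= ?tree0 // => p; rewrite subn0 drop_size.
have [hI hc] := IH (ltnW hm); have [c Ec] := drop_suffix_cons hm.
rewrite (runS hm Ec); split; first exact: step_state_inv.
have := step_cost_amortized hm hI Ec; cbn [fst snd]; rewrite mulnS; lia.
Qed.
End Run.

Theorem lemma7 :
  exists c : nat, forall (S P : finType) (T : seq (S + P)),
    (forall m, m <= size T ->
       st_nodes (run T m).1 = PPH T (size T - m).+1) /\
    (run T (size T)).2 <= c * size T * (trunc_log 2 (#|S| + #|P|)).+1 /\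
    (forall m, m <= size T -> space (run T m).1 <= c * (size T).+1).
Proof.
exists 24 => S P T; split; [|split].
- by move=> m hm; rewrite (st_nodesE (run_inv hm).1).
- have [_ hc] := run_inv (leqnn (size T)).
  case: T hc => [|x T'] hc //; set T := x :: T' in hc *.
  have hx : 0 < #|S| + #|P|.
    by rewrite addn_gt0; case: (x) => y; apply/orP; [left|right]; apply/card_gt0P; exists y.
  have := bst_succ_le hx; set t := (trunc_log 2 _).+1; set B := bst _ => hB.
  apply: leq_trans (leq_trans (leq_addr _ _) hc) _.
  by rewrite -/B; nia.
- move=> m hm; have [[EN EL _ _ snx _ sbot] _] := run_inv hm.
  rewrite /space EN EL size_map size_behead size_tree //=; lia.
Qed.
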